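(* Every $2$-tree decomposition $\mathcal{G}=(G;T_1,T_2)$ has a realisation in the plane $\mathbb{R}^2$.
   Context: A multi-graph is finite and loop-free, possibly with parallel edges. A $2$-tree decomposition is a tuple $(G;T_1,T_2)$ where $G$ is a multi-graph and $T_1,T_2$ are spanning trees of $G$ whose edge sets partition $E(G)$ (distinct parallel edges are distinct edges); the one-vertex edgeless graph with edgeless trees is included. Realisations: for $x\in\mathbb{R}^d$, $\|x\|_\infty=\max_i|x\cdot e_i|$. A framework $(G,p)$ in $\mathbb{R}^d$ consists of a multi-graph $G$ and an injective map $p:V(G)\to\mathbb{R}^d$. If $u,w$ are joined by exactly $t\ge1$ edges ($t\le d$), the pair $\{p(u),p(w)\}$ is well-positioned if there are exactly $t$ distinct indices $k\in\{1,\dots,d\}$ with $\|p(u)-p(w)\|_\infty=|(p(u)-p(w))\cdot e_k|$; these indices are the framework colours of the pair. $(G,p)$ is well-positioned if every adjacent pair is well-positioned; a framework colouring $\kappa_p:E(G)\to\{1,\dots,d\}$ then assigns to the $t$ edges between $u,w$ the $t$ framework colours of $\{p(u),p(w)\}$ bijectively. A realisation of a $d$-tree decomposition $(G;T_1,\dots,T_d)$ is a well-positioned framework $(G,p)$ in $\mathbb{R}^d$ such that for some framework colouring $\kappa_p$, $\kappa_p^{-1}(i)=E(T_i)$ for each $i$. *)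

From Stdlib Require Import Reals.
From mathcomp Require Import all_boot.
Set Implicit Arguments. Unset Strict Implicit. Unset Printing Implicit Defensive.

(* A multigraph: finite vertex type V, finite edge type E, each edge e
   having endpoints src e and dst e (parallel edges = distinct elements of E). *)
Section MultiGraph.
Variables (V E : finType) (src dst : E -> V).

Definition loopfree : Prop := forall e, src e != dst e.

Definition joins (e : E) (x y : V) : bool :=
  ((src e == x) && (dst e == y)) || ((src e == y) && (dst e == x)).

Definition edges_between (u w : V) : {set E} := [set e | joins e u w].
Definition mult (u w : V) : nat := #|edges_between u w|.

Definition sub_connected (T : {set E}) : Prop :=
  forall x y : V, connect (fun a b => [exists e in T, joins e a b]) x y.

Definition has_cycle (T : {set E}) : Prop :=
  exists (es : seq E) (vs : seq V),
    [/\ 0 < size es, size vs = size es, uniq es && uniq vs,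
        {subset es <= T} &
        forall i, i < size es -> forall (e0 : E) (v0 : V),
          joins (nth e0 es i) (nth v0 vs i) (nth v0 vs (i.+1 %% size es))].

Definition spanning_tree (T : {set E}) : Prop :=
  sub_connected T /\ ~ has_cycle T.

Definition tree_decomposition (d : nat) (T : 'I_d -> {set E}) : Prop :=
  [/\ loopfree,
      forall i, spanning_tree (T i) &
      forall e, exists! i, e \in T i].

Definition reqb (x y : R) : bool := if Req_dec_T x y then true else false.

Definition linf (d : nat) (x : 'I_d -> R) : R :=
  foldr Rmax R0 [seq Rabs (x i) | i <- enum 'I_d].

Definition fcols (d : nat) (p : V -> 'I_d -> R) (u w : V) : {set 'I_d} :=
  [set k : 'I_d | reqb (Rabs (Rminus (p u k) (p w k)))
                       (linf (fun i => (Rminus (p u i) (p w i))))].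

Definition well_positioned (d : nat) (p : V -> 'I_d -> R) : Prop :=
  forall u w, 0 < mult u w -> #|fcols p u w| = mult u w.

Definition framework_colouring (d : nat) (p : V -> 'I_d -> R)
  (kappa : E -> 'I_d) : Prop :=
  forall u w, 0 < mult u w ->
    {in edges_between u w &, injective kappa} /\
    kappa @: edges_between u w = fcols p u w.

Definition realisation (d : nat) (T : 'I_d -> {set E})
  (p : V -> 'I_d -> R) : Prop :=
  [/\ injective p, well_positioned p &
      exists kappa : E -> 'I_d, framework_colouring p kappa /\
        forall i e, kappa e = i <-> e \in T i].

End MultiGraph.

From Stdlib Require Import Reals Lra Psatz.
From mathcomp Require Import all_boot zify.
Set Implicit Arguments. Unset Strict Implicit. Unset Printing Implicit Defensive.

(* Write a point of the plane as [(a + b, a - b)].  An edge lying only in the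
   first tree then asks [a] and [b] to increase together along it, an edge lying
   only in the second tree asks them to move in opposite directions, and a double
   edge asks one of [a], [b] to agree at its ends.  We argue by induction on the
   number of vertices, strengthening the statement so that ties happen exactly
   along the classes of double edges, each double edge being tied in a prescribed
   coordinate.  Counting degrees (each tree has [#|V| - 1] edges) gives a vertex [v]
   of total degree at most 3 and positive degree in both trees.  If [v] is a leaf
   of both trees we delete it; otherwise, after possibly exchanging the trees
   (negating [b]), [v] has first-tree neighbours [u1], [u2] and we replace the
   edges [u1 v], [v u2] by [u1 u2].  We realise the smaller decomposition and put
   [v] back in a suitable region; when [u1 u2] is also a second-tree edge, its
   tie must first be split by shifting one side of it slightly, which is
   possible because [u1 u2] is a bridge of the first tree. *)

(** * Connectivity *)

Section Connect.
Variable V : finType.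
Implicit Types (r : rel V) (L : seq (V * V)).

Lemma connect_ind r z (P : V -> Prop) :
  P z -> (forall x y, r x y -> connect r y z -> P y -> P x) ->
  forall x, connect r x z -> P x.
Proof.
move=> Pz IH x /connectP [p]; elim: p x => [|y p IHp] x /=; first by move=> _ <-.
move=> /andP [rxy pth] lst; apply: (IH x y rxy); last exact: IHp.
by apply/connectP; exists p.
Qed.

Lemma connect_mono r r' : subrel r r' -> subrel (connect r) (connect r').
Proof. by move=> sub; apply: connect_sub => x y /sub /connect1. Qed.

Lemma connect_flip r : symmetric r -> forall x y, connect r x y -> connect r y x.
Proof. by move=> sr x y; rewrite (sym_connect_sym sr). Qed.

Lemma connect_avoid r r' v y :
  symmetric r ->
  (forall x z, x != v -> z != v -> r x z -> r' x z) ->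
  (forall z z', r v z -> r v z' -> connect r' z z') ->
  (forall z, r v z -> z != v) ->
  y != v -> forall x, x != v -> connect r x y -> connect r' x y.
Proof.
move=> sr agr nb nbv yv.
pose P z := (z != v -> connect r' z y) /\
            (z = v -> forall z', r v z' -> connect r' z' y).
suff H x : connect r x y -> P x by move=> x xv /H [/(_ xv)].
apply: connect_ind x; first by split => // yv'; rewrite yv' eqxx in yv.
move=> x z rxz _ [Pz1 Pz2]; split => [xv|xv z' rvz'].
  case: (eqVneq z v) => [zv | zv]; first by apply: Pz2 => //; rewrite -zv sr.
  by apply: connect_trans (Pz1 zv); apply/connect1/agr.
subst x; apply: connect_trans (nb _ _ rvz' rxz) _; exact/Pz1/nbv.
Qed.

Definition add_edge r (u1 u2 : V) : rel V :=
  fun x y => r x y || ((x == u1) && (y == u2)) || ((x == u2) && (y == u1)).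

Lemma add_edge_sym r u1 u2 : symmetric r -> symmetric (add_edge r u1 u2).
Proof.
move=> sr x y; rewrite /add_edge sr.
by case: (r y x); case: (y == u1); case: (y == u2); case: (x == u1); case: (x == u2).
Qed.

Lemma add_edgeC r u1 u2 : add_edge r u1 u2 =2 add_edge r u2 u1.
Proof.
by move=> x y; rewrite /add_edge; case: (r x y); case: (x == u1); case: (x == u2);
  case: (y == u1); case: (y == u2).
Qed.

(* A path using the new edge reaches one of its ends first. *)
Lemma connect_add_edge r u1 u2 x y : connect (add_edge r u1 u2) x y ->
  [\/ connect r x y, connect r x u1 | connect r x u2].
Proof.
move: x; apply: connect_ind; first by constructor 1.
move=> x z /orP [/orP [rxz | /andP [/eqP -> _]] | /andP [/eqP -> _]] _;
  try by constructor.
by case=> H; [constructor 1 | constructor 2 | constructor 3];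
  apply: connect_trans H; apply: connect1.
Qed.

Lemma connect_add_edge2 r u1 u2 x y : symmetric r ->
  connect (add_edge r u1 u2) x y -> connect r x y \/
  ((connect r x u1 \/ connect r x u2) /\ (connect r y u1 \/ connect r y u2)).
Proof.
move=> sr cxy; have cyx : connect (add_edge r u1 u2) y x.
  by rewrite (sym_connect_sym (add_edge_sym u1 u2 sr)).
case: (connect_add_edge cxy) => [H|H|H]; first by left.
- case: (connect_add_edge cyx) => [H'|H'|H']; first by left; exact: (connect_flip sr H').
  + by right; split; left.
  + by right; split; [left | right].
- case: (connect_add_edge cyx) => [H'|H'|H']; first by left; exact: (connect_flip sr H').
  + by right; split; [right | left].
  + by right; split; right.
Qed.

Lemma add_edgeW r u1 u2 : subrel r (add_edge r u1 u2).
Proof. by move=> x y H; rewrite /add_edge H. Qed.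

Lemma connect_add_bridge r u1 u2 x y : symmetric r -> ~ connect r u1 u2 ->
  connect (add_edge r u1 u2) x y /\ connect r u2 x = connect r u2 y <->
  connect r x y.
Proof.
move=> sr n12; have flip := connect_flip sr.
split => [[/(connect_add_edge2 sr) [//|[H1 H2]] K]|cxy].
  case Kx: (connect r u2 x).
    by move: K; rewrite Kx => /esym Ky; exact: connect_trans (flip _ _ Kx) Ky.
  move: K; rewrite Kx => /esym Ky.
  have c1 : connect r x u1 by case: H1 => // /flip; rewrite Kx.
  have c2 : connect r y u1 by case: H2 => // /flip; rewrite Ky.
  exact: connect_trans c1 (flip _ _ c2).
split; first exact: connect_mono (@add_edgeW r u1 u2) _ _ cxy.
apply/idP/idP => H; first exact: connect_trans H cxy.
exact: connect_trans H (flip _ _ cxy).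
Qed.

Lemma connect_pendant r r' v u : symmetric r -> symmetric r' ->
  (forall x y, x != v -> y != v -> r x y = r' x y) -> (forall y, r' v y = false) ->
  (forall y, r v y -> y = u) -> u != v ->
  (forall x y, x != v -> y != v -> connect r x y <-> connect r' x y) /\
  (forall y, y != v -> connect r v y <-> r v u /\ connect r' u y).
Proof.
move=> sr sr' agr r'v nb uv.
have A x y : x != v -> y != v -> connect r x y <-> connect r' x y.
  move=> xv yv; split.
    apply: (connect_avoid sr _ _ _ yv xv) => [p q pv qv|z z' /nb -> /nb ->|z /nb ->] //.
    by rewrite agr.
  suff H x' : connect r' x' y -> x' != v -> connect r x' y by move/H/(_ xv).
  move: x'; apply: connect_ind => // x' z rxz _ IH xv'.
  have zv : z != v by apply: contraTneq rxz => ->; rewrite sr' r'v.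
  by apply: connect_trans (IH zv); apply: connect1; rewrite agr.
split => // y yv; split => [|[rvu c]].
  case/connectP => [[|z p]] /=; first by move=> _ E; rewrite -E eqxx in yv.
  case/andP => /[dup] rvz /nb E pth lst; subst z; split => //.
  by apply/(A _ _ uv yv)/connectP; exists p.
by apply: connect_trans (connect1 rvu) _; apply/(A _ _ uv yv).
Qed.

Definition adj L : rel V := fun x y => ((x, y) \in L) || ((y, x) \in L).

Lemma adj_sym L : symmetric (adj L).
Proof. by move=> x y; rewrite /adj orbC. Qed.

Lemma adj_cons L u1 u2 : adj ((u1, u2) :: L) =2 add_edge (adj L) u1 u2.
Proof.
move=> x y; rewrite /adj /add_edge !in_cons !xpair_eqE.
by case: (x == u1); case: (y == u2); case: (x == u2); case: (y == u1);
  case: ((x, y) \in L); case: ((y, x) \in L).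
Qed.

Lemma adjP L x y : reflect ((x, y) \in L \/ (y, x) \in L) (adj L x y).
Proof. exact: orP. Qed.

End Connect.

Section Count.
Variable V : finType.
Implicit Types (L : seq (V * V)) (R S : {set V}).

Definition within S L := forall p, p \in L -> (p.1 \in S) && (p.2 \in S).

Definition connected_on S L :=
  forall x y, x \in S -> y \in S -> connect (adj L) x y.

Lemma adj_consW L p : subrel (adj L) (adj (p :: L)).
Proof. by case: p => u1 u2 x y H; rewrite adj_cons /add_edge H. Qed.

Lemma connect_adj_nil (x y : V) : connect (adj [::]) x y -> y = x.
Proof. by case/connectP => [[|z p]] //= _ ->. Qed.

Lemma roots_add_edge L R u1 u2 z :
  (exists2 r, r \in R & connect (adj L) u1 r) ->
  (exists2 r, r \in R & connect (add_edge (adj L) u1 u2) z r) ->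
  exists2 r, r \in u2 |: R & connect (adj L) z r.
Proof.
move=> [r1 r1R c1] [r rR /connect_add_edge [c|c|c]].
- by exists r; rewrite // in_setU1 rR orbT.
- by exists r1; [rewrite in_setU1 r1R orbT | apply: connect_trans c1].
- by exists u2; rewrite // in_setU1 eqxx.
Qed.

(* Each edge merges at most two classes, so [#|S| - size L] roots suffice. *)
Lemma card_le_roots L R S : within S L ->
  {in S, forall x, exists2 r, r \in R & connect (adj L) x r} ->
  #|S| <= #|R| + size L.
Proof.
elim: L R => [|[x0 y0] L IH] R Lin HR /=.
  rewrite addn0; apply/subset_leq_card/subsetP => x xS.
  by have [r rR /connect_adj_nil <-] := HR x xS.
have Lin' : within S L by move=> p pL; apply: Lin; rewrite in_cons pL orbT.
have /andP [x0S y0S] := Lin _ (mem_head _ _).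
pose G := add_edge (adj L) x0 y0.
have HG : {in S, forall x, exists2 r, r \in R & connect G x r}.
  by move=> x /HR [r rR c]; exists r; rewrite // -(eq_connect (adj_cons L x0 y0)).
have step u1 u2 : add_edge (adj L) u1 u2 =2 G ->
    (exists2 r, r \in R & connect (adj L) u1 r) -> #|S| <= #|R| + (size L).+1.
  move=> EG root; apply: leq_trans (IH (u2 |: R) Lin' _) _.
    move=> z /HG [r rR c]; apply: (roots_add_edge root).
    by exists r; rewrite // (eq_connect EG).
  by rewrite cardsU1; have := leq_b1 (u2 \notin R); lia.
have [r0 r0R c0] := HG x0 x0S.
have symG : symmetric G by apply/add_edge_sym/adj_sym.
case: (connect_add_edge (connect_flip symG c0)) => /(connect_flip (adj_sym L)) c.
- by apply: (step x0 y0) => //; exists r0.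
- by apply: (step x0 y0) => //; exists r0.
- by apply: (step y0 x0 (add_edgeC _ _ _)); exists r0.
Qed.

Lemma connected_card_le S L s : within S L -> connected_on S L -> s \in S ->
  #|S| <= (size L).+1.
Proof.
move=> Lin cL sS; have := card_le_roots (R := [set s]) Lin.
rewrite cards1; apply => x xS; exists s; [by rewrite in_set1 | exact: cL].
Qed.

Lemma tree_bridge S L q : within S L -> connected_on S L -> (size L).+1 = #|S| ->
  q \in L -> ~ connect (adj (rem q L)) q.1 q.2.
Proof.
move=> Lin cL sz qL cq.
have /andP [q1S _] := Lin q qL.
have Lin' : within S (rem q L) by move=> p /mem_rem; exact: Lin.
have cL' : connected_on S (rem q L).
  move=> x y xS yS; apply: (connect_sub _ (cL x y xS yS)) => a b /adjP [H|H].
  - case: (eqVneq (a, b) q) => [E|ne]; first by subst q.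
    by apply: connect1; rewrite /adj (rem_mem ne H).
  - case: (eqVneq (b, a) q) => [E|ne]; first by subst q; move: cq => /= /(connect_flip (adj_sym _)).
    by apply: connect1; rewrite /adj (rem_mem ne H) orbT.
have := connected_card_le Lin' cL' q1S.
by rewrite size_rem // -sz; case: (L) qL => //= _ l _; lia.
Qed.

Fixpoint acyclic_pairs L : Prop :=
  if L is p :: L' then ~ connect (adj L') p.1 p.2 /\ acyclic_pairs L' else True.

Lemma acyclic_roots L : acyclic_pairs L -> exists R : {set V},
  #|R| + size L <= #|V| /\ forall x, exists2 r, r \in R & connect (adj L) x r.
Proof.
elim: L => [|p L IH] /= => [_|[br /IH [R [cR HR]]]].
  by exists setT; rewrite cardsT addn0; split => // x; exists x.
have [rx rxR cx] := HR p.1; have [ry ryR cy] := HR p.2.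
have nxy : rx != ry.
  apply: contra_notN br => /eqP E; apply: connect_trans cx _.
  by rewrite E; exact: (connect_flip (adj_sym L) cy).
have mono := connect_mono (adj_consW (L := L) p).
exists (R :\ ry); split; first by move: cR; rewrite (cardsD1 ry R) ryR /=; lia.
move=> z; have [r rR c] := HR z.
case: (eqVneq r ry) => [E|N]; last by exists r; [rewrite in_setD1 N | exact: mono].
exists rx; first by rewrite in_setD1 nxy.
apply: connect_trans (mono _ _ c) _; rewrite E.
apply: (connect_trans (y := p.2)); first exact/mono/(connect_flip (adj_sym L)).
apply: (connect_trans (y := p.1) _ (mono _ _ cx)); apply: connect1.
by case: p {br cx cy mono c} => a b; rewrite adj_cons /add_edge /= !eqxx !orbT.
Qed.

Lemma acyclic_size L : acyclic_pairs L -> 0 < #|V| -> (size L).+1 <= #|V|.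
Proof.
move=> aL /card_gt0P [x _]; have [R [cR HR]] := acyclic_roots aL.
have [r rR _] := HR x; apply: leq_trans cR.
by rewrite -addn1 addnC leq_add2r; apply/card_gt0P; exists r.
Qed.

End Count.

Section Trees.
Variable V : finType.
Implicit Types (L : seq (V * V)) (S : {set V}) (v : V).

Definition loopless L := forall p, p \in L -> p.1 != p.2.

Record tree_on S L : Prop := TreeOn {
  tree_within : within S L;
  tree_loopless : loopless L;
  tree_connected : connected_on S L;
  tree_size : (size L).+1 = #|S| }.

Definition inc v (p : V * V) := (p.1 == v) || (p.2 == v).
Definition deg L v := count (inc v) L.
Definition other v (p : V * V) := if p.1 == v then p.2 else p.1.
Definition nbrs L v := [seq other v p | p <- L & inc v p].
Definition del_vertex v L := [seq p <- L | ~~ inc v p].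

Lemma size_nbrs L v : size (nbrs L v) = deg L v.
Proof. by rewrite size_map size_filter. Qed.

Lemma adj_nbrs L v y : adj L v y = (y \in nbrs L v).
Proof.
apply/idP/mapP => [/adjP [H|H] | [[a b]]].
- by exists (v, y); rewrite ?mem_filter /inc /other /= ?eqxx.
- exists (y, v); rewrite ?mem_filter /inc /other /= ?eqxx ?orbT //.
  by case: eqP.
rewrite mem_filter /inc /other /= => /andP [/orP [/eqP Ea|/eqP Eb] pL] ->.
  by subst; rewrite eqxx /adj pL.
by case: eqP => [Ea|_]; subst; rewrite /adj pL ?orbT.
Qed.

Lemma adj_deg1 L v : deg L v = 1 -> exists u, forall y, adj L v y = (y == u).
Proof.
rewrite -size_nbrs; case E: (nbrs L v) => [|u [|]] // _.
by exists u => y; rewrite adj_nbrs E inE.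
Qed.

Lemma adj_deg2 L v : deg L v = 2 ->
  exists u1 u2, forall y, adj L v y = (y == u1) || (y == u2).
Proof.
rewrite -size_nbrs; case E: (nbrs L v) => [|u1 [|u2 []]] // _.
by exists u1, u2 => y; rewrite adj_nbrs E !inE.
Qed.

Lemma adj_loop L v : loopless L -> ~~ adj L v v.
Proof. by move=> l; apply/negP => /adjP [] /l; rewrite eqxx. Qed.

Lemma adj_within S L x y : within S L -> loopless L -> adj L x y -> y \in S :\ x.
Proof.
move=> Lin l /adjP [] H; have /andP [h1 h2] := Lin _ H; have := l _ H;
  by rewrite /= in h1 h2 *; rewrite in_setD1 ?h1 ?h2 // eq_sym => ->.
Qed.

Lemma sum_deg S L : within S L -> loopless L -> \sum_(v in S) deg L v = 2 * size L.
Proof.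
elim: L => [|p L IH] Lin l; first by rewrite big1.
have /andP [p1S p2S] := Lin p (mem_head _ _).
have np := l p (mem_head _ _).
have -> : \sum_(v in S) deg (p :: L) v =
          \sum_(v in S) ((p.1 == v) + (p.2 == v) + deg L v).
  apply: eq_bigr => v _; rewrite /deg /= /inc.
  case: (eqVneq p.1 v) => [<-|_] /=; last by rewrite add0n.
  by rewrite ?eqxx eq_sym (negbTE np) addn0.
have one a : a \in S -> \sum_(v in S) (a == v) = 1.
  move=> aS; rewrite (bigD1 a) //= eqxx big1 // => i /andP [_ H].
  by rewrite eq_sym (negbTE H).
rewrite !big_split /= !one // IH => [|q qL|q qL]; last 2 first.
- by apply: Lin; rewrite in_cons qL orbT.
- by apply: l; rewrite in_cons qL orbT.
by rewrite /= mulnS; lia.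
Qed.

Lemma deg_gt0 S L v : tree_on S L -> v \in S -> 1 < #|S| -> 0 < deg L v.
Proof.
move=> [_ _ cL _] vS S1.
have : 0 < #|S :\ v| by move: S1; rewrite (cardsD1 v S) vS; lia.
case/card_gt0P => s; rewrite in_setD1 => /andP [sv sS].
have /connectP [[|z p] /=] := cL v s vS sS; first by move=> _ E; rewrite E eqxx in sv.
by move=> /andP [+ _] _; rewrite adj_nbrs -size_nbrs; case: (nbrs L v).
Qed.

(* Summing degrees: [2 (#|S| - 1) + 2 (#|S| - 1) < 4 #|S|]. *)
Lemma low_degree_vertex S L1 L2 : tree_on S L1 -> tree_on S L2 -> 1 < #|S| ->
  exists2 v, v \in S & [/\ deg L1 v + deg L2 v <= 3, 0 < deg L1 v & 0 < deg L2 v].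
Proof.
move=> T1 T2 S1.
case: (boolP [exists v in S, deg L1 v + deg L2 v <= 3]).
  case/existsP => v /andP [vS d]; exists v => //.
  by split; [|exact: deg_gt0 T1 vS S1|exact: deg_gt0 T2 vS S1].
rewrite negb_exists => /forallP H.
have : \sum_(v in S) 4 <= \sum_(v in S) (deg L1 v + deg L2 v).
  by apply: leq_sum => v vS; have := H v; rewrite vS /=; lia.
rewrite big_split /= !sum_deg ?sum_nat_const; try by case: T1; try by case: T2.
by have := tree_size T1; have := tree_size T2; lia.
Qed.

Lemma adj_del_vertex v L x y : x != v -> y != v ->
  adj (del_vertex v L) x y = adj L x y.
Proof.
by move=> xv yv; rewrite /adj !mem_filter /inc /= (negbTE xv) (negbTE yv).
Qed.

Lemma adj_del_vertexl v L y : adj (del_vertex v L) v y = false.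
Proof. by rewrite /adj !mem_filter /inc /= eqxx ?orbT. Qed.

Lemma size_del_vertex v L : (size (del_vertex v L) + deg L v)%N = size L.
Proof. by rewrite size_filter /deg addnC (count_predC (inc v)). Qed.

Lemma within_del_vertex S L v : within S L -> within (S :\ v) (del_vertex v L).
Proof.
move=> Lin p; rewrite mem_filter /inc negb_or => /andP [/andP [n1 n2] pL].
by have /andP [p1 p2] := Lin p pL; rewrite !in_setD1 n1 n2 p1 p2.
Qed.

Lemma loopless_del_vertex L v : loopless L -> loopless (del_vertex v L).
Proof. by move=> l p; rewrite mem_filter => /andP [_ /l]. Qed.

Lemma connected_del_vertex S L L' v : tree_on S L -> v \in S ->
  (forall x z, x != v -> z != v -> adj L x z -> adj L' x z) ->
  (forall z z', adj L v z -> adj L v z' -> connect (adj L') z z') ->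
  connected_on (S :\ v) L'.
Proof.
move=> [_ l cL _] vS agr nb x y; rewrite !in_setD1 => /andP [xv xS] /andP [yv yS].
apply: (connect_avoid (adj_sym L) agr nb _ yv xv (cL x y xS yS)) => z vz.
by apply: contraTneq vz => ->; exact: adj_loop.
Qed.

Lemma card_setD1S S v : v \in S -> #|S :\ v|.+1 = #|S|.
Proof. by move=> vS; rewrite (cardsD1 v S) vS. Qed.

Lemma tree_del_leaf S L v : tree_on S L -> v \in S -> deg L v = 1 ->
  tree_on (S :\ v) (del_vertex v L).
Proof.
move=> TL vS d; have [u Hu] := adj_deg1 d; constructor.
- exact: within_del_vertex (tree_within TL).
- exact: loopless_del_vertex (tree_loopless TL).
- apply: connected_del_vertex TL vS _ _ => [x z xv zv|z z'].
    by rewrite adj_del_vertex.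
  by rewrite !Hu => /eqP -> /eqP ->.
- by have := size_del_vertex v L; have := tree_size TL; have := card_setD1S vS; lia.
Qed.

Lemma deg2_nbrs_neq S L v u1 u2 : tree_on S L -> v \in S -> deg L v = 2 ->
  (forall y, adj L v y = (y == u1) || (y == u2)) -> u1 != u2.
Proof.
move=> TL vS d nb; apply/eqP => E; subst u2.
have cL' : connected_on (S :\ v) (del_vertex v L).
  apply: connected_del_vertex TL vS _ _ => [x z xv zv|z z'].
    by rewrite adj_del_vertex.
  by rewrite !nb !orbb => /eqP -> /eqP ->.
have u1S : u1 \in S :\ v.
  by apply: adj_within (tree_within TL) (tree_loopless TL) _; rewrite nb eqxx.
have := connected_card_le (within_del_vertex (v := v) (tree_within TL)) cL' u1S.
by have := size_del_vertex v L; have := card_setD1S vS; have := tree_size TL; lia.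
Qed.

Lemma tree_smooth S L v u1 u2 : tree_on S L -> v \in S -> deg L v = 2 ->
  (forall y, adj L v y = (y == u1) || (y == u2)) ->
  tree_on (S :\ v) ((u1, u2) :: del_vertex v L).
Proof.
move=> TL vS d nb.
have n12 := deg2_nbrs_neq TL vS d nb.
have uS u : adj L v u -> u \in S :\ v.
  exact: adj_within (tree_within TL) (tree_loopless TL).
constructor.
- move=> p; rewrite in_cons => /orP [/eqP -> /=|]; last exact: (within_del_vertex (tree_within TL)).
  by rewrite /= !uS // nb eqxx ?orbT.
- move=> p; rewrite in_cons => /orP [/eqP -> //|].
  exact/loopless_del_vertex/(tree_loopless TL).
- apply: connected_del_vertex TL vS _ _ => [x z xv zv|z z'].
    by rewrite adj_cons /add_edge adj_del_vertex // => ->.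
  have e12 : connect (adj ((u1, u2) :: del_vertex v L)) u1 u2.
    by apply: connect1; rewrite adj_cons /add_edge !eqxx orbT.
  rewrite !nb => /orP [] /eqP -> /orP [] /eqP -> //;
    exact: (connect_flip (adj_sym _) e12).
- by have := size_del_vertex v L; have := tree_size TL; have := card_setD1S vS; rewrite /=; lia.
Qed.

End Trees.

(** * Diagonal realisations *)

Section Diagonal.
Variable V : finType.
Implicit Types (L : seq (V * V)) (S : {set V}) (sg : rel V) (a b : V -> R).
Local Open Scope R_scope.

Definition tied L1 L2 sg : rel V := fun x y => [&& adj L1 x y, adj L2 x y & sg x y].
Definition relN sg : rel V := fun x y => ~~ sg x y.
Definition relabel sg (u1 u2 : V) (t : bool) : rel V :=
  fun x y => if ((x == u1) && (y == u2)) || ((x == u2) && (y == u1)) then t else sg x y.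

(* Coordinates [(a, b)] are diagonal: the point is [(a + b, a - b)], so an edge
   has colour [ord0] iff [(a x - a y) (b x - b y) >= 0] and colour [ord_max] iff
   it is [<= 0].  Edges of both trees are "tied": one diagonal coordinate agrees
   at their ends, which one being chosen by the symmetric labelling [sg]; the
   ties are required to be exactly the classes of tied edges. *)
Record diag_real S L1 L2 sg a b : Prop := DiagReal {
  dr_inj : {in S &, forall x y, a x = a y -> b x = b y -> x = y};
  dr_pos : forall x y, adj L1 x y -> ~~ adj L2 x y -> 0 < (a x - a y) * (b x - b y);
  dr_neg : forall x y, adj L2 x y -> ~~ adj L1 x y -> (a x - a y) * (b x - b y) < 0;
  dr_tieA : {in S &, forall x y, a x = a y <-> connect (tied L1 L2 sg) x y};
  dr_tieB : {in S &, forall x y, b x = b y <-> connect (tied L1 L2 (relN sg)) x y} }.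

Lemma tied_sym L1 L2 sg : symmetric sg -> symmetric (tied L1 L2 sg).
Proof. by move=> s x y; rewrite /tied adj_sym (adj_sym L2) s. Qed.

Lemma tied_adj L1 L2 sg : subrel (tied L1 L2 sg) (adj L1).
Proof. by move=> x y /and3P []. Qed.

Lemma relN_sym sg : symmetric sg -> symmetric (relN sg).
Proof. by move=> s x y; rewrite /relN s. Qed.

Lemma relabel_sym sg u1 u2 t : symmetric sg -> symmetric (relabel sg u1 u2 t).
Proof.
move=> s x y; rewrite /relabel s.
by case: (x == u1); case: (x == u2); case: (y == u1); case: (y == u2).
Qed.

Lemma relN_relabel sg u1 u2 t : relN (relabel sg u1 u2 t) =2 relabel (relN sg) u1 u2 (~~ t).
Proof. by move=> x y; rewrite /relN /relabel; case: ifP. Qed.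

Lemma eq_tied L1 L2 sg sg' : sg =2 sg' -> tied L1 L2 sg =2 tied L1 L2 sg'.
Proof. by move=> E x y; rewrite /tied E. Qed.

Lemma tiedC L1 L2 sg : tied L1 L2 sg =2 tied L2 L1 sg.
Proof. by move=> x y; rewrite /tied andbA [adj L1 x y && _]andbC -andbA. Qed.

Lemma tied_cons L1 L2 sg u1 u2 t : ~~ adj L1 u1 u2 ->
  tied ((u1, u2) :: L1) L2 (relabel sg u1 u2 t) =2
  if t && adj L2 u1 u2 then add_edge (tied L1 L2 sg) u1 u2 else tied L1 L2 sg.
Proof.
move=> nh x y; have nh' : adj L1 u2 u1 = false by rewrite adj_sym (negbTE nh).
rewrite /tied adj_cons /add_edge /relabel (fun_if (fun r : rel V => r x y)) /=.
case: (boolP (((x == u1) && (y == u2)) || ((x == u2) && (y == u1)))) => [|/negbTE E].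
  case/orP => /andP [/eqP -> /eqP ->]; rewrite ?(adj_sym L2 u2) ?nh' ?(negbTE nh);
    by case: t; case: (adj L2 u1 u2); rewrite /= ?eqxx ?orbT.
move: E; case: (x == u1); case: (y == u2); case: (x == u2); case: (y == u1) => //= _;
  by case: ifP; rewrite ?orbF.
Qed.

Lemma diag_real_eq S L1 L2 sg sg' a b : sg =2 sg' ->
  diag_real S L1 L2 sg a b -> diag_real S L1 L2 sg' a b.
Proof.
move=> E [i s1 s2 tA tB]; have EN : relN sg =2 relN sg' by move=> p q; rewrite /relN E.
constructor => // x y xS yS.
- by rewrite tA // (eq_connect (eq_tied _ _ E)).
- by rewrite tB // (eq_connect (eq_tied _ _ EN)).
Qed.

Lemma diag_real_apart S L1 L2 sg a b x y : diag_real S L1 L2 sg a b ->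
  x \in S -> y \in S -> x != y -> a x <> a y \/ b x <> b y.
Proof.
move=> RR xS yS /eqP xy; case: (Req_dec (a x) (a y)) => E; [right => E' | by left].
exact/xy/(dr_inj RR xS yS E E').
Qed.

Lemma diag_real_swap S L1 L2 sg a b :
  diag_real S L1 L2 sg a b -> diag_real S L1 L2 (relN sg) b a.
Proof.
move=> [i s1 s2 tA tB]; constructor => //.
- by move=> x y xS yS H1 H2; apply: i.
- by move=> x y H1 H2; rewrite Rmult_comm; apply: s1.
- by move=> x y H1 H2; rewrite Rmult_comm; apply: s2.
- have NN : sg =2 relN (relN sg) by move=> p q; rewrite /relN negbK.
  by move=> x y xS yS; rewrite tA // (eq_connect (eq_tied _ _ NN)).
Qed.

Lemma diag_real_swap_trees S L1 L2 sg a b :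
  diag_real S L2 L1 sg a b -> diag_real S L1 L2 sg a (fun z => - b z).
Proof.
move=> [i s1 s2 tA tB]; constructor.
- by move=> x y xS yS H1 H2; apply: i => //; lra.
- by move=> x y H1 H2; have := s2 x y H1 H2; nra.
- by move=> x y H1 H2; have := s1 x y H1 H2; nra.
- by move=> x y xS yS; rewrite tA // (eq_connect (tiedC _ _ _)).
- by move=> x y xS yS; rewrite -(eq_connect (tiedC _ _ _)) -tB //; split; lra.
Qed.

Definition extend (f : V -> R) (v : V) (fv : R) : V -> R :=
  fun z => if z == v then fv else f z.

Lemma extend_tie S L1 L2 sg v u (a : V -> R) av :
  symmetric sg -> v \in S -> u \in S :\ v ->
  {in S :\ v &, forall x y,
     a x = a y <-> connect (tied (del_vertex v L1) (del_vertex v L2) sg) x y} ->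
  (forall y, adj L1 v y && adj L2 v y -> y = u) ->
  {in S :\ v, forall y, av = a y <-> tied L1 L2 sg v u /\ a u = a y} ->
  {in S &, forall x y, extend a v av x = extend a v av y <-> connect (tied L1 L2 sg) x y}.
Proof.
move=> ssg vS uS tA nb loc; rewrite /extend.
have uv : u != v by move: uS; rewrite in_setD1 => /andP [].
have agr x y : x != v -> y != v ->
    tied L1 L2 sg x y = tied (del_vertex v L1) (del_vertex v L2) sg x y.
  by move=> xv yv; rewrite /tied !adj_del_vertex.
have r'v y : tied (del_vertex v L1) (del_vertex v L2) sg v y = false.
  by rewrite /tied adj_del_vertexl.
have nb' y : tied L1 L2 sg v y -> y = u by case/and3P => H1 H2 _; apply: nb; rewrite H1.
have [PA PB] := connect_pendant (tied_sym L1 L2 ssg) (tied_sym _ _ ssg) agr r'v nb' uv.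
have sy := sym_connect_sym (tied_sym L1 L2 ssg).
have S' y : y \in S -> y != v -> y \in S :\ v by move=> yS yv; rewrite in_setD1 yv.
move=> x y xS yS; case: (eqVneq x v) => [->|xv]; case: (eqVneq y v) => [->|yv].
- by split => // _; exact: connect0.
- by rewrite (loc y (S' y yS yv)) (PB y yv) (tA u y uS (S' y yS yv)).
- rewrite sy (PB x xv) -(tA u x uS (S' x xS xv)) -(loc x (S' x xS xv)).
  by split => ->.
- by rewrite (tA x y (S' x xS xv) (S' y yS yv)) (PA _ _ xv yv).
Qed.

Lemma diag_real_extend S L1 L2 sg v u a b av bv :
  symmetric sg -> v \in S -> u \in S :\ v -> loopless L1 -> loopless L2 ->
  diag_real (S :\ v) (del_vertex v L1) (del_vertex v L2) sg a b ->
  (forall y, adj L1 v y && adj L2 v y -> y = u) ->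
  {in S :\ v, forall y, av = a y -> bv = b y -> False} ->
  (forall y, adj L1 v y -> ~~ adj L2 v y -> 0 < (av - a y) * (bv - b y)) ->
  (forall y, adj L2 v y -> ~~ adj L1 v y -> (av - a y) * (bv - b y) < 0) ->
  {in S :\ v, forall y, av = a y <-> tied L1 L2 sg v u /\ a u = a y} ->
  {in S :\ v, forall y, bv = b y <-> tied L1 L2 (relN sg) v u /\ b u = b y} ->
  diag_real S L1 L2 sg (extend a v av) (extend b v bv).
Proof.
move=> ssg vS uS l1 l2 RR nb inj pos neg tA tB.
have S' y : y \in S -> y != v -> y \in S :\ v by move=> yS yv; rewrite in_setD1 yv.
rewrite /extend; constructor.
- move=> x y xS yS; case: (eqVneq x v) => [->|xv]; case: (eqVneq y v) => [->|yv] //.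
  + by move=> E1 E2; case: (inj y (S' y yS yv) E1 E2).
  + by move=> E1 E2; case: (inj x (S' x xS xv) (esym E1) (esym E2)).
  + exact: (dr_inj RR (S' x xS xv) (S' y yS yv)).
- move=> x y H1 H2; case: (eqVneq x v) => [E|xv]; case: (eqVneq y v) => [E'|yv].
  + by subst x y; move: H1; rewrite (negbTE (adj_loop v l1)).
  + by subst x; apply: pos.
  + by subst y; have := pos x; rewrite !(adj_sym _ v) => /(_ H1 H2); nra.
  + by apply: (dr_pos RR); rewrite adj_del_vertex.
- move=> x y H1 H2; case: (eqVneq x v) => [E|xv]; case: (eqVneq y v) => [E'|yv].
  + by subst x y; move: H1; rewrite (negbTE (adj_loop v l2)).
  + by subst x; apply: neg.
  + by subst y; have := neg x; rewrite !(adj_sym _ v) => /(_ H1 H2); nra.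
  + by apply: (dr_neg RR); rewrite adj_del_vertex.
- exact: (extend_tie ssg vS uS (dr_tieA RR) nb tA).
- exact: (extend_tie (relN_sym ssg) vS uS (dr_tieB RR) nb tB).
Qed.

End Diagonal.

(** * Placing a new vertex *)

Section Placement.
Variable V : finType.
Variables (A : {set V}) (a b : V -> R).
Local Open Scope R_scope.

Definition fresh (f : V -> R) (t : R) := {in A, forall y, t <> f y}.

Lemma fresh_between f lo hi : lo < hi -> exists2 t, lo < t < hi & fresh f t.
Proof.
suff H (s : seq V) l h : l < h -> exists2 t, l < t < h & forall y, y \in s -> t <> f y.
  by move=> /(H (enum A)) [t ht Ht]; exists t => // y yA; apply: Ht; rewrite mem_enum.
elim: s l h => [|y s IH] lo' hi' lh; first by exists ((lo' + hi') / 2); [lra|].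
have [t ht Ht] := IH lo' hi' lh.
case: (Req_dec t (f y)) => [E|ne]; last first.
  by exists t => // z; rewrite in_cons => /orP [/eqP ->|/Ht].
have [t' ht' Ht'] := IH lo' t ltac:(lra).
by exists t'; [lra | move=> z; rewrite in_cons => /orP [/eqP ->|/Ht']; lra].
Qed.

Lemma fresh_gt f lo : exists2 t, lo < t & fresh f t.
Proof. by have [t [ht _] Ht] := fresh_between f (Rlt_plus_1 lo); exists t. Qed.

Lemma fresh_lt f hi : exists2 t, t < hi & fresh f t.
Proof. by have [t [_ ht] Ht] := fresh_between f (ltac:(lra) : hi - 1 < hi); exists t. Qed.

Lemma place_pos_neg au bu aw bw : au <> aw \/ bu <> bw ->
  exists av bv, [/\ fresh a av, fresh b bv,
    0 < (av - au) * (bv - bu) & (av - aw) * (bv - bw) < 0].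
Proof.
move=> neq; case: (Rtotal_order au aw) => [h|[E|h]].
- have [av hav Hav] := fresh_between a h.
  have [bv hbv Hbv] := fresh_gt b (Rmax bu bw).
  have := Rmax_l bu bw; have := Rmax_r bu bw => m1 m2.
  by exists av, bv; split => //; nra.
- have {}neq : bu <> bw by case: neq => // /(_ E) [].
  case: (Rtotal_order bu bw) => [h|[//|h]].
  + have [bv hbv Hbv] := fresh_between b h; have [av hav Hav] := fresh_gt a au.
    by exists av, bv; split => //; nra.
  + have [bv hbv Hbv] := fresh_between b h; have [av hav Hav] := fresh_lt a au.
    by exists av, bv; split => //; nra.
- have [av hav Hav] := fresh_between a h.
  have [bv hbv Hbv] := fresh_lt b (Rmin bu bw).
  have := Rmin_l bu bw; have := Rmin_r bu bw => m1 m2.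
  by exists av, bv; split => //; nra.
Qed.

(* The points comparable to both [u1 <= u2] fill the quadrant below [u1], the
   quadrant above [u2] and the box between them. *)
Lemma place_box a1 b1 a2 b2 aw bw : a1 < a2 -> b1 < b2 ->
  (a1 <> aw \/ b1 <> bw) -> (a2 <> aw \/ b2 <> bw) ->
  exists av bv, [/\ fresh a av, fresh b bv, 0 < (av - a1) * (bv - b1),
     0 < (av - a2) * (bv - b2) & (av - aw) * (bv - bw) < 0].
Proof.
move=> ha hb n1 n2.
case: (Rlt_le_dec bw b1) => h1.
  have [bv hbv Hbv] := fresh_between b h1; have [av hav Hav] := fresh_lt a (Rmin a1 aw).
  have := Rmin_l a1 aw; have := Rmin_r a1 aw => m1 m2.
  by exists av, bv; split => //; nra.
case: (Rlt_le_dec aw a1) => h2.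
  have [av hav Hav] := fresh_between a h2; have [bv hbv Hbv] := fresh_lt b (Rmin b1 bw).
  have := Rmin_l b1 bw; have := Rmin_r b1 bw => m1 m2.
  by exists av, bv; split => //; nra.
case: (Rlt_le_dec a2 aw) => h3.
  have [av hav Hav] := fresh_between a h3; have [bv hbv Hbv] := fresh_gt b (Rmax b2 bw).
  have := Rmax_l b2 bw; have := Rmax_r b2 bw => m1 m2.
  by exists av, bv; split => //; nra.
case: (Rlt_le_dec b2 bw) => h4.
  have [bv hbv Hbv] := fresh_between b h4; have [av hav Hav] := fresh_gt a (Rmax a2 aw).
  have := Rmax_l a2 aw; have := Rmax_r a2 aw => m1 m2.
  by exists av, bv; split => //; nra.
have [[h5 h6]|[h5 h6]] : (a1 < aw /\ bw < b2) \/ (aw < a2 /\ b1 < bw).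
  case: (Rlt_le_dec a1 aw) => h5; case: (Rlt_le_dec bw b2) => h6;
    [left | right | right | right]; split => //;
    by [case: n2 => ?; lra | case: n1 => ?; lra | lra].
- have [av hav Hav] := fresh_between a h5; have [bv hbv Hbv] := fresh_between b h6.
  by exists av, bv; split => //; nra.
- have [av hav Hav] := fresh_between a h5; have [bv hbv Hbv] := fresh_between b h6.
  by exists av, bv; split => //; nra.
Qed.

Lemma place_pos2_neg a1 b1 a2 b2 aw bw : 0 < (a1 - a2) * (b1 - b2) ->
  (a1 <> aw \/ b1 <> bw) -> (a2 <> aw \/ b2 <> bw) ->
  exists av bv, [/\ fresh a av, fresh b bv, 0 < (av - a1) * (bv - b1),
     0 < (av - a2) * (bv - b2) & (av - aw) * (bv - bw) < 0].
Proof.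
move=> h n1 n2; case: (Rlt_le_dec a1 a2) => ha.
  by apply: place_box => //; nra.
have ha' : a2 < a1 by case: (Rle_lt_or_eq_dec _ _ ha) => // E; subst; nra.
have [av [bv [? ? ? ? ?]]] := @place_box a2 b2 a1 b1 aw bw ha' ltac:(nra) n2 n1.
by exists av, bv.
Qed.

Lemma place_tie_b a1 a2 b2 : a1 <> a2 ->
  exists2 bv, fresh b bv & 0 < (a1 - a2) * (bv - b2).
Proof.
move=> n; case: (Rlt_le_dec a1 a2) => h.
  by have [bv hb Hb] := fresh_lt b b2; exists bv => //; nra.
by have [bv hb Hb] := fresh_gt b b2; exists bv => //; nra.
Qed.

Lemma place_outside_a a1 b1 a2 b2 aw bw : 0 < (aw - a1) * (aw - a2) ->
  exists av bv, [/\ fresh a av, fresh b bv, 0 < (av - a1) * (bv - b1),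
     0 < (av - a2) * (bv - b2) & (av - aw) * (bv - bw) < 0].
Proof.
move=> h; case: (Rlt_le_dec a1 aw) => h1.
  have [av hav Hav] := fresh_between a (Rmax_lub_lt a1 a2 aw h1 ltac:(nra)).
  have [bv hbv Hbv] := fresh_gt b (Rmax (Rmax b1 b2) bw).
  have := Rmax_l a1 a2; have := Rmax_r a1 a2.
  have := Rmax_l (Rmax b1 b2) bw; have := Rmax_r (Rmax b1 b2) bw.
  have := Rmax_l b1 b2; have := Rmax_r b1 b2 => *.
  by exists av, bv; split => //; nra.
have h1' : aw < a1 by case: (Rle_lt_or_eq_dec _ _ h1) => // E; subst; nra.
have [av hav Hav] := fresh_between a (Rmin_glb_lt a1 a2 aw h1' ltac:(nra)).
have [bv hbv Hbv] := fresh_lt b (Rmin (Rmin b1 b2) bw).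
have := Rmin_l a1 a2; have := Rmin_r a1 a2.
have := Rmin_l (Rmin b1 b2) bw; have := Rmin_r (Rmin b1 b2) bw.
have := Rmin_l b1 b2; have := Rmin_r b1 b2 => *.
by exists av, bv; split => //; nra.
Qed.

End Placement.

Section PlacementSwap.
Variables (V : finType) (A : {set V}) (a b : V -> R).
Local Open Scope R_scope.

Lemma place_outside_b a1 b1 a2 b2 aw bw : 0 < (bw - b1) * (bw - b2) ->
  exists av bv, [/\ fresh A a av, fresh A b bv, 0 < (av - a1) * (bv - b1),
     0 < (av - a2) * (bv - b2) & (av - aw) * (bv - bw) < 0].
Proof.
move=> h; have [bv [av [? ? ? ? ?]]] := @place_outside_a V A b a b1 a1 b2 a2 bw aw h.
by exists av, bv; split => //; nra.
Qed.

End PlacementSwap.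

(** * Splitting a tie *)

Section SignFacts.
Local Open Scope R_scope.

Lemma mul_pos_near t t' : Rabs (t' - t) < Rabs t -> 0 < t' * t.
Proof. by rewrite /Rabs; case: Rcase_abs; case: Rcase_abs => *; nra. Qed.

Lemma sign_trans_pos p q r : 0 < r * p -> 0 < p * q -> 0 < r * q.
Proof. by case: (Rtotal_order p 0) => [h|[->|h]]; nra. Qed.

Lemma sign_trans_neg p q r : 0 < r * p -> p * q < 0 -> r * q < 0.
Proof. by case: (Rtotal_order p 0) => [h|[->|h]]; nra. Qed.

Lemma sign_common t x y : 0 < x * t -> 0 < y * t -> 0 < x * y.
Proof. by case: (Rtotal_order t 0) => [h|[->|h]]; nra. Qed.

Lemma exists_small_signed g t : 0 < g -> t <> 0 ->
  exists d, 0 < Rabs d < g /\ 0 < d * t.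
Proof.
move=> gp tn; case: (Rlt_le_dec 0 t) => ht.
  by exists (g / 2); rewrite Rabs_pos_eq; [split; [split|]; nra | lra].
have {}ht : t < 0 by case: (Rle_lt_or_eq_dec _ _ ht).
by exists (- (g / 2)); rewrite Rabs_Ropp Rabs_pos_eq; [split; [split|]; nra | lra].
Qed.

End SignFacts.

Section Shift.
Variables (V : finType) (a : V -> R).
Local Open Scope R_scope.

Lemma exists_gap : exists2 g, 0 < g & forall x y, a x <> a y -> g <= Rabs (a x - a y).
Proof.
suff [g gp Hg] : exists2 g, 0 < g & forall p, p \in enum [set: V * V] ->
    a p.1 <> a p.2 -> g <= Rabs (a p.1 - a p.2).
  by exists g => // x y; apply: (Hg (x, y)); rewrite mem_enum in_setT.
elim: (enum _) => [|p s [g gp Hg]]; first by exists 1; [lra|].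
case: (Req_dec (a p.1) (a p.2)) => hp.
  by exists g => // q; rewrite in_cons => /orP [/eqP -> //|/Hg].
exists (Rmin g (Rabs (a p.1 - a p.2))); first by apply: Rmin_glb_lt => //; split_Rabs; lra.
move=> q; rewrite in_cons => /orP [/eqP -> _|qs hq]; first exact: Rmin_r.
exact: Rle_trans (Rmin_l _ _) (Hg q qs hq).
Qed.

Variables (K : pred V) (d g : R).
Hypotheses (gap : forall x y, a x <> a y -> g <= Rabs (a x - a y))
  (hd : 0 < Rabs d < g).

Definition shift z := if K z then a z + d else a z.

(* The shift moves every difference by less than the gap, so no sign changes. *)
Lemma shift_sign x y : a x <> a y -> 0 < (shift x - shift y) * (a x - a y).
Proof.
move=> n; apply: mul_pos_near; apply: Rlt_le_trans (gap n).
have -> : shift x - shift y - (a x - a y) =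
          (if K x then d else 0) - (if K y then d else 0).
  by rewrite /shift; case: (K x); case: (K y); ring.
case: (K x); case: (K y); rewrite ?Rminus_diag ?Rminus_0_r ?Rminus_0_l ?Rabs_Ropp
  ?Rabs_R0; lra.
Qed.

Lemma shift_eq x y : shift x = shift y <-> a x = a y /\ K x = K y.
Proof.
have mixed u w : K u -> K w = false -> a u + d <> a w.
  move=> Ku Kw E; case: (Req_dec (a u) (a w)) => [Ea|n].
    have d0 : d = 0 by lra.
    by move: hd; rewrite d0 Rabs_R0; lra.
  by have := shift_sign n; rewrite /shift Ku Kw E Rminus_diag Rmult_0_l; lra.
rewrite /shift; case Kx: (K x); case Ky: (K y).
- by split => [E|[E _]]; [split => //; lra | lra].
- by split => [/(mixed _ _ Kx Ky) | []].
- by split => [/esym /(mixed _ _ Ky Kx) | []].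
- by split => [|[]].
Qed.

End Shift.

Section Split.
Variable V : finType.
Implicit Types (L : seq (V * V)) (S : {set V}) (sg : rel V) (a b : V -> R).
Local Open Scope R_scope.

Lemma tied_cons_off L1 L2 sg u1 u2 t : ~~ adj L1 u1 u2 -> ~~ (t && adj L2 u1 u2) ->
  tied ((u1, u2) :: L1) L2 (relabel sg u1 u2 t) =2 tied L1 L2 sg.
Proof. by move=> nh /negbTE off x y; rewrite tied_cons // off. Qed.

Lemma tied_consN L1 L2 sg u1 u2 : ~~ adj L1 u1 u2 ->
  tied ((u1, u2) :: L1) L2 (relN (relabel sg u1 u2 true)) =2 tied L1 L2 (relN sg).
Proof.
move=> nh x y; rewrite (eq_tied _ _ (relN_relabel sg u1 u2 true)).
exact: tied_cons_off.
Qed.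

Lemma diag_real_drop S L1 L2 sg u1 u2 t a b :
  ~~ adj L1 u1 u2 -> ~~ adj L2 u1 u2 ->
  diag_real S ((u1, u2) :: L1) L2 (relabel sg u1 u2 t) a b -> diag_real S L1 L2 sg a b.
Proof.
move=> nh ng RR; have off t' : ~~ (t' && adj L2 u1 u2) by rewrite (negbTE ng) andbF.
constructor.
- exact: (dr_inj RR).
- by move=> x y H1 H2; apply: (dr_pos RR) => //; apply: adj_consW.
- move=> x y H2 H1; apply: (dr_neg RR) => //; rewrite adj_cons /add_edge (negbTE H1).
  by apply/negP => /orP [] /andP [/eqP Ex /eqP Ey]; subst x y;
    rewrite ?(adj_sym _ u2) (negbTE ng) in H2.
- by move=> x y xS yS; rewrite (dr_tieA RR xS yS) (eq_connect (tied_cons_off _ nh (off t))).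
- move=> x y xS yS; rewrite (dr_tieB RR xS yS) (eq_connect (eq_tied _ _ (relN_relabel _ _ _ _))).
  by rewrite (eq_connect (tied_cons_off _ nh (off _))).
Qed.

(* Splitting the tie along a double edge [u1 u2] whose first-tree copy is a
   bridge: shifting the [a]-class of [u2] turns [u1 u2] into a second-tree edge
   and pushes everything not tied to [u1] to the same side of both ends. *)
Lemma diag_real_split S L1 L2 sg u1 u2 a b :
  symmetric sg -> u1 \in S -> u2 \in S -> u1 != u2 ->
  adj L2 u1 u2 -> ~~ adj L1 u1 u2 -> ~ connect (tied L1 L2 sg) u1 u2 ->
  diag_real S ((u1, u2) :: L1) L2 (relabel sg u1 u2 true) a b ->
  exists a', diag_real S L1 L2 sg a' b /\
    {in S, forall z, a z <> a u1 -> 0 < (a' z - a' u1) * (a' z - a' u2)}.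
Proof.
move=> ssg u1S u2S n12 g12 nh ncon RR.
set r := tied L1 L2 sg; have sr : symmetric r := tied_sym _ _ ssg.
have Er : tied ((u1, u2) :: L1) L2 (relabel sg u1 u2 true) =2 add_edge r u1 u2.
  by move=> x y; rewrite tied_cons // g12.
have a12 : a u1 = a u2.
  by apply/(dr_tieA RR u1S u2S)/connect1; rewrite Er /add_edge !eqxx orbT.
have b12 : b u1 - b u2 <> 0.
  by move=> E; move: n12; rewrite (dr_inj RR u1S u2S a12 (ltac:(lra))) eqxx.
have [g gp gap] := exists_gap a.
have [d [hd sd]] := exists_small_signed gp b12.
pose K := connect r u2.
have Ku1 : K u1 = false by apply/negP => /(connect_flip sr).
have Ku2 : K u2 by apply: connect0.
have sgn := shift_sign K gap hd; have eqs := shift_eq K gap hd.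
exists (shift a K d); split => [|z zS az]; last first.
  apply: (sign_common (t := a z - a u1)); first exact: sgn.
  by rewrite a12; apply: sgn; rewrite -a12.
have sh12 : shift a K d u1 - shift a K d u2 = - d by rewrite /shift Ku1 Ku2 a12; ring.
constructor.
- by move=> x y xS yS /eqs [E _]; exact: (dr_inj RR xS yS E).
- move=> x y H1 H2; have P := dr_pos RR (adj_consW (u1, u2) H1) H2.
  have n : a x <> a y by move=> E; move: P; rewrite E Rminus_diag Rmult_0_l; lra.
  exact: sign_trans_pos (sgn _ _ n) P.
- move=> x y H2 H1; case: (boolP (adj ((u1, u2) :: L1) x y)) => H1'.
    move: H1'; rewrite adj_cons /add_edge (negbTE H1) /=.
    case/orP => /andP [/eqP -> /eqP ->]; rewrite ?sh12; first nra.
    by rewrite -Ropp_minus_distr sh12; nra.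
  have P := dr_neg RR H2 H1'.
  have n : a x <> a y by move=> E; move: P; rewrite E Rminus_diag Rmult_0_l; lra.
  exact: sign_trans_neg (sgn _ _ n) P.
- move=> x y xS yS; rewrite eqs (dr_tieA RR xS yS) (eq_connect Er).
  exact: connect_add_bridge.
- by move=> x y xS yS; rewrite (dr_tieB RR xS yS) (eq_connect (tied_consN _ _ nh)).
Qed.

End Split.

(** * The induction *)

Section Reduction.
Variable V : finType.
Implicit Types (L : seq (V * V)) (S : {set V}) (sg : rel V) (a b : V -> R).
Local Open Scope R_scope.

Definition realisable S L1 L2 :=
  forall sg, symmetric sg -> exists a b, diag_real S L1 L2 sg a b.

Lemma diag_real_relN S L1 L2 sg :
  (exists a b, diag_real S L1 L2 (relN sg) a b) -> exists a b, diag_real S L1 L2 sg a b.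
Proof.
move=> [a [b /diag_real_swap RR]]; exists b, a.
by apply: diag_real_eq RR => x y; rewrite /relN negbK.
Qed.

Lemma realisable_swap_trees S L1 L2 : realisable S L2 L1 -> realisable S L1 L2.
Proof.
move=> IH sg ssg; have [a [b RR]] := IH sg ssg.
by exists a, (fun z => - b z); exact: diag_real_swap_trees.
Qed.

Lemma realisable_oriented S L1 L2 (x y : V) :
  (forall sg, symmetric sg -> sg x y -> exists a b, diag_real S L1 L2 sg a b) ->
  realisable S L1 L2.
Proof.
move=> H sg ssg; case: (boolP (sg x y)) => [|ns]; first exact: H.
by apply: diag_real_relN; apply: H; [exact: relN_sym | exact: ns].
Qed.

Lemma realise_leaf S L1 L2 v : tree_on S L1 -> tree_on S L2 -> v \in S ->
  deg L1 v = 1%N -> deg L2 v = 1%N ->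
  realisable (S :\ v) (del_vertex v L1) (del_vertex v L2) -> realisable S L1 L2.
Proof.
move=> T1 T2 vS /adj_deg1 [u Hu] /adj_deg1 [w Hw] IH.
have l1 := tree_loopless T1; have l2 := tree_loopless T2.
have uS : u \in S :\ v by apply: adj_within (tree_within T1) l1 _; rewrite Hu.
have wS : w \in S :\ v by apply: adj_within (tree_within T2) l2 _; rewrite Hw.
case: (eqVneq u w) => [Euw|uw].
  subst w; apply: (realisable_oriented (x := v) (y := u)) => sg ssg hsg.
  have [a [b RR]] := IH sg ssg; have [bv _ Hb] := fresh_gt (S :\ v) b 0.
  exists (extend a v (a u)), (extend b v bv).
  have tvu : tied L1 L2 sg v u by rewrite /tied Hu Hw eqxx hsg.
  apply: (diag_real_extend ssg vS uS l1 l2 RR) => [y|y yS _ E|y|y|y yS|y yS].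
  - by rewrite Hu => /andP [/eqP].
  - exact: Hb y yS E.
  - by rewrite Hu Hw => /eqP ->; rewrite eqxx.
  - by rewrite Hu Hw => /eqP ->; rewrite eqxx.
  - by split => [E|[_ E]].
  - split => [E|[]]; first by case: (Hb y yS E).
    by rewrite /tied /relN hsg !andbF.
move=> sg ssg; have [a [b RR]] := IH sg ssg.
have ndv sg' : tied L1 L2 sg' v u = false by rewrite /tied Hu Hw eqxx (negbTE uw).
have [av [bv [Ha Hb P1 P2]]] :=
  place_pos_neg (S :\ v) a b (diag_real_apart RR uS wS uw).
exists (extend a v av), (extend b v bv).
apply: (diag_real_extend ssg vS uS l1 l2 RR) => [y|y yS E|y|y|y yS|y yS].
- by rewrite Hu => /andP [/eqP].
- by case: (Ha y yS E).
- by rewrite Hu => /eqP ->.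
- by rewrite Hw => /eqP ->.
- by rewrite ndv; split => [E|[]] //; case: (Ha y yS E).
- by rewrite ndv; split => [E|[]] //; case: (Hb y yS E).
Qed.

End Reduction.

Section Smoothing.
Variable V : finType.
Implicit Types (sg : rel V) (a b : V -> R).
Local Open Scope R_scope.

Variables (S : {set V}) (L1 L2 : seq (V * V)) (u1 u2 : V).
Hypotheses (u1S : u1 \in S) (u2S : u2 \in S) (n12 : u1 != u2)
  (bridge : ~ connect (adj L1) u1 u2)
  (IH : realisable S ((u1, u2) :: L1) L2).

Let nh : ~~ adj L1 u1 u2.
Proof. by apply/negP => /connect1. Qed.

Let ntied sg : ~ connect (tied L1 L2 sg) u1 u2.
Proof. by move/(connect_mono (@tied_adj _ L1 L2 sg)). Qed.

Lemma exists_diag_real_apart sg : symmetric sg ->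
  exists a b, diag_real S L1 L2 sg a b /\ a u1 <> a u2.
Proof.
move=> ssg; have [a [b RA]] := IH (relabel_sym u1 u2 true ssg).
have zero_prod (f h : V -> R) x y : f x = f y -> (f x - f y) * (h x - h y) = 0.
  by move=> ->; ring.
have e12 : adj ((u1, u2) :: L1) u1 u2 by rewrite adj_cons /add_edge !eqxx orbT.
case: (boolP (adj L2 u1 u2)) => g.
  have [a' [RR _]] := diag_real_split ssg u1S u2S n12 g nh (@ntied sg) RA.
  by exists a', b; split => // /(zero_prod _ b); have := dr_neg RR g nh; lra.
exists a, b; split; first exact: diag_real_drop nh g RA.
by move/(zero_prod _ b); have := dr_pos RA e12 g; lra.
Qed.

Lemma tie_apart sg w a b a2 b2 : w \in S -> w != u1 -> w != u2 ->
  adj L2 u1 u2 -> a w = a u1 -> a u1 = a u2 ->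
  diag_real S ((u1, u2) :: L1) L2 (relabel sg u1 u2 true) a b ->
  diag_real S ((u1, u2) :: L1) L2 (relabel sg u1 u2 false) a2 b2 -> b2 w <> b2 u1.
Proof.
move=> wS w1 w2 g Ew a12 RA RB /(dr_tieB RB wS u1S).
rewrite (eq_connect (eq_tied _ _ (relN_relabel sg u1 u2 false))).
rewrite (eq_connect (tied_cons _ _ _ nh)) /= g.
have tie z : z \in S -> a w = a z -> connect (tied L1 L2 (relN sg)) w z -> w = z.
  move=> zS Ea c; apply: (dr_inj RA wS zS Ea); apply/(dr_tieB RA wS zS).
  by rewrite (eq_connect (tied_consN _ _ nh)).
case/connect_add_edge => c.
- by move/eqP: w1; apply; exact: tie c.
- by move/eqP: w1; apply; exact: tie c.
- by move/eqP: w2; apply; apply: tie c; rewrite -?a12.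
Qed.

Lemma exists_diag_real_position sg w : symmetric sg -> w \in S -> w != u1 -> w != u2 ->
  exists a b, diag_real S L1 L2 sg a b /\ exists av bv, [/\ fresh S a av, fresh S b bv,
    0 < (av - a u1) * (bv - b u1), 0 < (av - a u2) * (bv - b u2)
    & (av - a w) * (bv - b w) < 0].
Proof.
move=> ssg wS w1 w2; have [a [b RA]] := IH (relabel_sym u1 u2 true ssg).
have e12 : adj ((u1, u2) :: L1) u1 u2 by rewrite adj_cons /add_edge !eqxx orbT.
case: (boolP (adj L2 u1 u2)) => g; last first.
  exists a, b; split; first exact: diag_real_drop nh g RA.
  apply: place_pos2_neg (dr_pos RA e12 g) _ _; apply: (diag_real_apart RA) => //;
    by rewrite eq_sym.
have a12 : a u1 = a u2.
  by apply/(dr_tieA RA u1S u2S)/connect1; rewrite (tied_cons _ _ _ nh) g /= /add_edge !eqxx orbT.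
case: (Req_dec (a w) (a u1)) => Eaw; last first.
  have [a' [RR out]] := diag_real_split ssg u1S u2S n12 g nh (@ntied sg) RA.
  by exists a', b; split => //; apply: place_outside_a; exact: out.
have [a2 [b2 RB]] := IH (relabel_sym u1 u2 false ssg).
have nb2 := tie_apart wS w1 w2 g Eaw a12 RA RB.
have RB' : diag_real S ((u1, u2) :: L1) L2 (relabel (relN sg) u1 u2 true) b2 a2.
  by apply: diag_real_eq (diag_real_swap RB) => x y; rewrite relN_relabel.
have [b' [RR out]] := diag_real_split (relN_sym ssg) u1S u2S n12 g nh (@ntied _) RB'.
exists a2, b'; split; last by apply: place_outside_b; exact: out.
by apply: diag_real_eq (diag_real_swap RR) => x y; rewrite /relN negbK.
Qed.

End Smoothing.

Section SmoothingStep.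
Variable V : finType.

Variables (S : {set V}) (L1 L2 : seq (V * V)) (v u1 u2 : V).
Hypotheses (T1 : tree_on S L1) (T2 : tree_on S L2) (vS : v \in S)
  (d1 : deg L1 v = 2) (nb : forall y, adj L1 v y = (y == u1) || (y == u2))
  (IH : realisable (S :\ v) ((u1, u2) :: del_vertex v L1) (del_vertex v L2)).

Let T1' := tree_smooth T1 vS d1 nb.
Let n12 := deg2_nbrs_neq T1 vS d1 nb.
Let l1 := tree_loopless T1.
Let l2 := tree_loopless T2.

Let nbS u : adj L1 v u -> u \in S :\ v.
Proof. exact: adj_within (tree_within T1) l1. Qed.

Let u1S : u1 \in S :\ v. Proof. by rewrite nbS // nb eqxx. Qed.
Let u2S : u2 \in S :\ v. Proof. by rewrite nbS // nb eqxx orbT. Qed.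

Let bridge : ~ connect (adj (del_vertex v L1)) u1 u2.
Proof.
have := tree_bridge (tree_within T1') (tree_connected T1') (tree_size T1') (mem_head _ _).
by rewrite /= eqxx.
Qed.

Lemma realise_smooth_double : (forall y, adj L2 v y = (y == u1)) -> realisable S L1 L2.
Proof.
move=> Hw; apply: (realisable_oriented (x := v) (y := u1)) => sg ssg hsg.
have [a [b [RR a12]]] := exists_diag_real_apart u1S u2S n12 bridge IH ssg.
have [bv Hb Pb] := place_tie_b (S :\ v) b (b u2) a12.
exists (extend a v (a u1)), (extend b v bv).
have tvu : tied L1 L2 sg v u1 by rewrite /tied nb Hw eqxx hsg.
apply: (diag_real_extend ssg vS u1S l1 l2 RR) => [y|y yS _ E|y|y|y yS|y yS].
- by rewrite Hw => /andP [_ /eqP].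
- by case: (Hb y yS E).
- by rewrite nb Hw => /orP [] /eqP -> //; rewrite eqxx.
- by rewrite nb Hw => /eqP ->; rewrite eqxx.
- by split => [E|[_ E]].
- split => [E|[]]; first by case: (Hb y yS E).
  by rewrite /tied /relN hsg !andbF.
Qed.

Lemma realise_smooth_single w : (forall y, adj L2 v y = (y == w)) ->
  w != u1 -> w != u2 -> realisable S L1 L2.
Proof.
move=> Hw w1 w2 sg ssg.
have wS : w \in S :\ v by apply: adj_within (tree_within T2) l2 _; rewrite Hw.
have [a [b [RR [av [bv [Ha Hb P1 P2 P3]]]]]] :=
  exists_diag_real_position u1S u2S n12 bridge IH ssg wS w1 w2.
exists (extend a v av), (extend b v bv).
have ndv sg' : tied L1 L2 sg' v u1 = false.
  by rewrite /tied Hw eq_sym (negbTE w1) andbF.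
apply: (diag_real_extend ssg vS u1S l1 l2 RR) => [y|y yS E|y|y|y yS|y yS].
- by rewrite nb Hw => /andP [/orP [] /eqP -> /eqP E]; move: w1 w2; rewrite E eqxx.
- by case: (Ha y yS E).
- by rewrite nb => /orP [] /eqP ->.
- by rewrite Hw => /eqP ->.
- by rewrite ndv; split => [E|[]] //; case: (Ha y yS E).
- by rewrite ndv; split => [E|[]] //; case: (Hb y yS E).
Qed.

End SmoothingStep.


Section Induction.
Variable V : finType.
Implicit Types (L : seq (V * V)) (S : {set V}).
Local Open Scope R_scope.

Lemma realise_smooth S L1 L2 v : tree_on S L1 -> tree_on S L2 -> v \in S ->
  deg L1 v = 2%N -> deg L2 v = 1%N ->
  (forall M1 M2, tree_on (S :\ v) M1 -> tree_on (S :\ v) M2 -> realisable (S :\ v) M1 M2) ->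
  realisable S L1 L2.
Proof.
move=> T1 T2 vS d1 d2 IH.
have [u1 [u2 nb]] := adj_deg2 d1; have [w Hw] := adj_deg1 d2.
have T2' := tree_del_leaf T2 vS d2.
wlog w2 : u1 u2 nb / w != u2.
  move=> H; case: (eqVneq w u2) => [E|]; last exact: H.
  apply: (H u2 u1) => [y|]; first by rewrite nb orbC.
  by rewrite E eq_sym (deg2_nbrs_neq T1 vS d1 nb).
have IH' := IH _ _ (tree_smooth T1 vS d1 nb) T2'.
case: (eqVneq w u1) => [Ew|w1]; last exact: (realise_smooth_single T1 T2 vS d1 nb IH' Hw w1 w2).
by subst w; exact: (realise_smooth_double T1 T2 vS d1 nb IH' Hw).
Qed.

Lemma realisable_trees n S L1 L2 : #|S| = n.+1 -> tree_on S L1 -> tree_on S L2 ->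
  realisable S L1 L2.
Proof.
elim: n S L1 L2 => [|n IHn] S L1 L2 cS T1 T2.
  have [s Es] : exists s, S = [set s] by apply/cards1P; rewrite cS.
  have nil L : tree_on S L -> L = [::] by case=> _ _ _; rewrite cS; case: L.
  rewrite (nil _ T1) (nil _ T2) => sg _; exists (fun _ => 0), (fun _ => 0).
  have one x y : x \in S -> y \in S -> x = y by rewrite Es !in_set1 => /eqP -> /eqP ->.
  by constructor => // x y xS yS; rewrite (one x y xS yS) //; split => // _;
    exact: connect0.
have [v vS [d3 p1 p2]] := low_degree_vertex T1 T2 (ltac:(by rewrite cS) : (1 < #|S|)%N).
have IH M1 M2 : tree_on (S :\ v) M1 -> tree_on (S :\ v) M2 -> realisable (S :\ v) M1 M2.
  by apply: IHn; have := card_setD1S vS; rewrite cS => -[].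
case E1: (deg L1 v) p1 d3 => [//|[|[|k]]] _; case E2: (deg L2 v) p2 => [//|[|[|k']]] _ //= d3;
  try by exfalso; lia.
- exact: realise_leaf T1 T2 vS E1 E2 (IH _ _ (tree_del_leaf T1 vS E1) (tree_del_leaf T2 vS E2)).
- exact/realisable_swap_trees/(realise_smooth T2 T1 vS E2 E1).
- exact: realise_smooth T1 T2 vS E1 E2 IH.
Qed.

End Induction.

(** * Edge sets of the multigraph *)

Section EdgeSets.
Variables (V E : finType) (src dst : E -> V).
Implicit Types (T : {set E}) (s : seq E).

Definition epairs s := [seq (src e, dst e) | e <- s].

Lemma adj_epairs s x y : adj (epairs s) x y = has (fun e => joins src dst e x y) s.
Proof.
apply/idP/hasP => [/adjP [] /mapP [e es [-> ->]]|[e es]]; first 2 last.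
- by case/orP => /andP [/eqP <- /eqP <-]; apply/orP; [left|right];
    apply/mapP; exists e.
- by exists e; rewrite // /joins !eqxx.
- by exists e; rewrite // /joins !eqxx orbT.
Qed.

Lemma adj_enum T x y : adj (epairs (enum T)) x y = [exists e in T, joins src dst e x y].
Proof.
rewrite adj_epairs; apply/hasP/existsP => [[e]|[e /andP [eT J]]].
  by rewrite mem_enum => eT J; exists e; rewrite eT.
by exists e; rewrite ?mem_enum.
Qed.

Lemma joins_eq e a b c d : joins src dst e a b -> joins src dst e c d ->
  (a = c /\ b = d) \/ (a = d /\ b = c).
Proof.
by rewrite /joins => /orP [] /andP [/eqP <- /eqP <-] /orP [] /andP [/eqP -> /eqP ->];
  [left|right|right|left].
Qed.

Lemma path_edges s x p : path (adj (epairs s)) x p -> uniq (x :: p) ->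
  exists es : seq E, [/\ size es = size p, uniq es, {subset es <= s} &
    forall i, i < size p -> forall e0 v0,
      joins src dst (nth e0 es i) (nth v0 (x :: p) i) (nth v0 (x :: p) i.+1)].
Proof.
elim: p x => [|z p IH] x /=; first by exists [::].
case/andP => /[dup] axz; rewrite adj_epairs => /hasP [f fs Jf] pth.
case/andP => xp uq; have [es [ses ues sub J]] := IH z pth uq.
exists (f :: es); split => /=; [by rewrite ses | | | by case].
- rewrite ues andbT; apply: contraNN xp => /(nthP f) [i ie Ei].
  have := J i (ltac:(by rewrite -ses)) f x; rewrite Ei.
  have ip : i < size (z :: p) by rewrite /= -ses ltnW.
  have ip' : i.+1 < size (z :: p) by rewrite /= -ses.
  by case/(joins_eq Jf) => [[-> _]|[-> _]]; rewrite mem_nth.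
- by move=> g; rewrite in_cons => /orP [/eqP ->|/sub].
Qed.

Lemma cycle_of_connect T e s : loopfree src dst -> e \in T -> e \notin s ->
  {subset s <= T} -> connect (adj (epairs s)) (src e) (dst e) -> has_cycle src dst T.
Proof.
move=> lf eT ens sT /connectP [p pth0].
case: (shortenP pth0) => p' pth uq _ lst {pth0 p}.
have [es [ses ues sub J]] := path_edges pth uq.
have kp : 0 < size p' by case: (p') lst => //= Ee; have := lf e; rewrite Ee eqxx.
exists (rcons es e), (src e :: p'); split.
- by rewrite size_rcons.
- by rewrite size_rcons ses.
- by rewrite rcons_uniq ues uq !andbT; apply: contra ens; apply: sub.
- by move=> f; rewrite mem_rcons in_cons => /orP [/eqP ->|/sub /sT].
move=> i; rewrite size_rcons ses ltnS leq_eqVlt => /orP [/eqP ->|ilt] e0 v0.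
  rewrite nth_rcons ses ltnn eqxx modnn /=.
  by rewrite -(last_nth v0) -lst /joins !eqxx orbT.
rewrite nth_rcons ses ilt modn_small; last by rewrite ltnS.
exact: J.
Qed.

Lemma acyclic_epairs T s : loopfree src dst -> ~ has_cycle src dst T ->
  uniq s -> {subset s <= T} -> acyclic_pairs (epairs s).
Proof.
move=> lf nc; elim: s => [//|e s IH] /= /andP [ens us] sT; split.
  move=> c; apply: nc; apply: (cycle_of_connect lf _ ens _ c).
    by apply: sT; rewrite mem_head.
  by move=> f fs; apply: sT; rewrite in_cons fs orbT.
by apply: IH => // f fs; apply: sT; rewrite in_cons fs orbT.
Qed.

Lemma tree_on_enum T : loopfree src dst -> spanning_tree src dst T -> 0 < #|V| ->
  tree_on [set: V] (epairs (enum T)).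
Proof.
move=> lf [sc nc] Vp.
have cT : connected_on [set: V] (epairs (enum T)).
  by move=> x y _ _; rewrite (eq_connect (adj_enum T)); apply: sc.
have inT : within [set: V] (epairs (enum T)) by move=> *; rewrite !in_setT.
constructor => //; first by move=> _ /mapP [e _ ->]; exact: lf.
have [x _] := card_gt0P Vp.
have h1 := connected_card_le inT cT (in_setT x).
have sub : {subset enum T <= T} by move=> e; rewrite mem_enum.
have uT : uniq (enum T) by apply: enum_uniq.
have h2 := acyclic_size (acyclic_epairs lf nc uT sub) Vp.
by rewrite cardsT in h1 *; lia.
Qed.

Lemma no_parallel T e e' u w : loopfree src dst -> ~ has_cycle src dst T ->
  e \in T -> e' \in T -> joins src dst e u w -> joins src dst e' u w -> e = e'.
Proof.
move=> lf nc eT e'T J J'; apply/eqP/negPn/negP => ne; apply: nc.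
have uw : u != w.
  by apply: contra_neq (lf e) => Euw; move: J; rewrite /joins Euw orbb => /andP [/eqP -> /eqP ->].
exists [:: e; e'], [:: u; w]; split => //.
- by rewrite /= !in_cons in_nil !orbF ne uw.
- by move=> f; rewrite !in_cons in_nil orbF => /orP [] /eqP ->.
- move=> [|[|//]] _ e0 v0 //=.
  by move: J'; rewrite /joins orbC.
Qed.

End EdgeSets.

(** * Framework colours *)

Section Colours.
Local Open Scope R_scope.

Lemma ord2P (i : 'I_2) : i = ord0 \/ i = ord_max.
Proof. by case: i => [[|[|//]] ?]; [left|right]; apply: val_inj. Qed.

Lemma reqbP x y : reflect (x = y) (reqb x y).
Proof. by rewrite /reqb; case: Req_dec_T => h; constructor. Qed.

Lemma linf2 (x : 'I_2 -> R) : linf x = Rmax (Rabs (x ord0)) (Rabs (x ord_max)).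
Proof.
have E2 : enum 'I_2 = [:: ord0; ord_max] by apply: (inj_map val_inj); rewrite val_enum_ord.
by rewrite /linf E2 /= (Rmax_left (Rabs _) R0) //; apply: Rabs_pos.
Qed.

Lemma Rmax_eql x y : x = Rmax x y <-> y <= x.
Proof. by split => [->|h]; [apply: Rmax_r | rewrite Rmax_left]. Qed.

Lemma Rmax_eqr x y : y = Rmax x y <-> x <= y.
Proof. by split => [->|h]; [apply: Rmax_l | rewrite Rmax_right]. Qed.

Lemma Rabs_sub_le_add x y : Rabs (x - y) <= Rabs (x + y) <-> 0 <= x * y.
Proof. by rewrite /Rabs; case: Rcase_abs; case: Rcase_abs; split => *; nra. Qed.

Lemma Rabs_add_le_sub x y : Rabs (x + y) <= Rabs (x - y) <-> x * y <= 0.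
Proof. by rewrite /Rabs; case: Rcase_abs; case: Rcase_abs; split => *; nra. Qed.

Definition diag_point (V : finType) (a b : V -> R) (v : V) (i : 'I_2) : R :=
  if i == ord0 then a v + b v else a v - b v.

Lemma fcols_diag_point (V : finType) (a b : V -> R) u w :
  (ord0 \in fcols (diag_point a b) u w <-> 0 <= (a u - a w) * (b u - b w)) /\
  (ord_max \in fcols (diag_point a b) u w <-> (a u - a w) * (b u - b w) <= 0).
Proof.
rewrite !in_set linf2 /diag_point /=.
have -> : a u + b u - (a w + b w) = (a u - a w) + (b u - b w) by ring.
have -> : a u - b u - (a w - b w) = (a u - a w) - (b u - b w) by ring.
by split; [rewrite -Rabs_sub_le_add -Rmax_eql | rewrite -Rabs_add_le_sub -Rmax_eqr];
  split => /reqbP.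
Qed.

Lemma fcols_diag_real (V : finType) (L : 'I_2 -> seq (V * V)) a b u w :
  diag_real [set: V] (L ord0) (L ord_max) (fun _ _ => true) a b ->
  adj (L ord0) u w || adj (L ord_max) u w ->
  forall i, (i \in fcols (diag_point a b) u w) = adj (L i) u w.
Proof.
move=> RR hE i; have [F0 F1] := fcols_diag_point a b u w.
have tied0 : adj (L ord0) u w -> adj (L ord_max) u w -> (a u - a w) * (b u - b w) = 0.
  move=> h0 h1; suff -> : a u = a w by ring.
  by apply/(dr_tieA RR); rewrite ?in_setT //; apply: connect1; rewrite /tied h0 h1.
case: (ord2P i) => ->; apply/idP/idP.
- move/F0 => H; apply/negPn/negP => N; move: hE; rewrite (negbTE N) /= => H1.
  by have := dr_neg RR H1 N; lra.
- move=> H0; apply/F0; case: (boolP (adj (L ord_max) u w)) => H1.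
    by rewrite tied0 //; lra.
  by have := dr_pos RR H0 H1; lra.
- move/F1 => H; apply/negPn/negP => N; move: hE; rewrite (negbTE N) orbF => H0.
  by have := dr_pos RR H0 N; lra.
- move=> H1; apply/F1; case: (boolP (adj (L ord0) u w)) => H0.
    by rewrite tied0 //; lra.
  by have := dr_neg RR H1 H0; lra.
Qed.

End Colours.

Lemma tree_colouring (E : finType) d (T : 'I_d -> {set E}) :
  (forall e, exists! i, e \in T i) ->
  exists kappa : E -> 'I_d, forall i e, kappa e = i <-> e \in T i.
Proof.
move=> part; have [kappa Hk] : exists kappa : E -> 'I_d, forall e, e \in T (kappa e).
  apply: (@fin_all_exists E (fun=> 'I_d) (fun e i => e \in T i)) => e.
  by have [i [eT _]] := part e; exists i.
exists kappa => i e; split => [<- //|eT].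
by have [j [_ uj]] := part e; rewrite -(uj _ eT) (uj _ (Hk e)).
Qed.

Section Realisation.
Variables (V E : finType) (src dst : E -> V) (T : 'I_2 -> {set E}) (kappa : E -> 'I_2).
Hypotheses (TD : tree_decomposition src dst T)
  (kappaP : forall i e, kappa e = i <-> e \in T i).

Let tp i := epairs src dst (enum (T i)).

Lemma kappa_edges u w i :
  (i \in kappa @: edges_between src dst u w) = adj (tp i) u w.
Proof.
rewrite adj_enum; apply/imsetP/existsP => [[e]|[e /andP [eT J]]].
  by rewrite in_set => J ->; exists e; rewrite J andbT; apply/kappaP.
by exists e; [rewrite in_set | apply/esym/kappaP].
Qed.

Lemma kappa_inj u w : {in edges_between src dst u w &, injective kappa}.
Proof.
have [lf trees _] := TD; move=> e e'; rewrite !in_set => J J' Ek.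
have eT : e \in T (kappa e) by apply/kappaP.
have e'T : e' \in T (kappa e) by apply/kappaP; rewrite Ek.
exact: no_parallel lf (trees (kappa e)).2 eT e'T J J'.
Qed.

Lemma mult_gt0_adj u w : 0 < mult src dst u w -> adj (tp ord0) u w || adj (tp ord_max) u w.
Proof.
case/card_gt0P => e; rewrite in_set => J.
have : adj (tp (kappa e)) u w by rewrite -kappa_edges; apply/imsetP; exists e; rewrite ?in_set.
by case: (ord2P (kappa e)) => -> ->; rewrite ?orbT.
Qed.

Lemma realisation_diag a b :
  diag_real [set: V] (tp ord0) (tp ord_max) (fun _ _ => true) a b ->
  realisation src dst T (diag_point a b).
Proof.
move=> RR.
have img u w : 0 < mult src dst u w ->
    kappa @: edges_between src dst u w = fcols (diag_point a b) u w.
  move=> m; apply/setP => i.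
  by rewrite kappa_edges (fcols_diag_real (L := tp) RR (mult_gt0_adj m)).
split.
- move=> x y /(congr1 (fun p => (p ord0, p ord_max))); rewrite /diag_point /= => -[E0 E1].
  by apply: (dr_inj RR); rewrite ?in_setT //; lra.
- by move=> u w m; rewrite -img // card_in_imset //; exact: kappa_inj.
- by exists kappa; split => // u w m; split; [exact: kappa_inj | exact: img].
Qed.

Lemma realisation_void p : #|V| = 0 -> realisation src dst T p.
Proof.
move=> V0; have nov (x : V) : False by move: V0; rewrite -cardsT (cardsD1 x) in_setT.
by split => [x|u|]; [case: (nov x) | case: (nov u) | exists kappa; split => // u; case: (nov u)].
Qed.

End Realisation.


Theorem theorem4p3 (V E : finType) (src dst : E -> V) (T : 'I_2 -> {set E}) :
  tree_decomposition src dst T ->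
  exists p : V -> 'I_2 -> R, realisation src dst T p.
Proof.
move=> TD; have [kappa kappaP] := tree_colouring (let: And3 _ _ part := TD in part).
case: (posnP #|V|) => [V0|Vp].
  by exists (fun _ _ => R0); exact: realisation_void.
have [lf trees _] := TD.
have cV : #|[set: V]| = (#|V|.-1).+1 by rewrite cardsT prednK.
have sym_true : symmetric (fun _ _ : V => true) by [].
have [a [b RR]] := realisable_trees cV (tree_on_enum lf (trees ord0) Vp)
  (tree_on_enum lf (trees ord_max) Vp) sym_true.
by exists (diag_point a b); exact: (realisation_diag TD kappaP RR).
Qed.
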